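(* Let $M_3$ be a number such that for any three mutually orthogonal affine planes in $\mathbb{R}^3$ at least one of them meets $\Gamma=\{\gamma(t):t\ge M_3\}$ in at most one point, where $\gamma(t)=(t,t^2,t^3)$, and assume $M_3>0$. Then for any three mutually orthogonal affine planes $H_1,H_2,H_3\subset\mathbb{R}^3$, the set $\Gamma\cap(H_1\cup H_2\cup H_3)$ has at most $6$ points.
   Context: Affine planes are mutually orthogonal if their normal vectors are pairwise orthogonal. *)

From mathcomp Require Import all_boot all_order all_algebra.
From mathcomp Require Export reals.
Set Implicit Arguments. Unset Strict Implicit. Unset Printing Implicit Defensive.
Import Order.TTheory GRing.Theory Num.Theory.
Local Open Scope ring_scope.

Definition pt (R : realType) := (R * R * R)%type.

Definition dot3 (R : realType) (u v : pt R) : R :=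
  u.1.1 * v.1.1 + u.1.2 * v.1.2 + u.2 * v.2.

Definition gamma (R : realType) (t : R) : pt R := (t, t ^+ 2, t ^+ 3).

(* An affine plane is given by a nonzero normal vector n and an offset c:
   H = { x | <n, x> = c }.  *)
Record plane (R : realType) := Plane { pnormal : pt R; poffset : R }.

Definition is_plane (R : realType) (H : plane R) : Prop := pnormal H <> (0, 0, 0).

Definition in_plane (R : realType) (H : plane R) (x : pt R) : Prop :=
  dot3 (pnormal H) x = poffset H.

Definition mutually_orthogonal (R : realType) (H1 H2 H3 : plane R) : Prop :=
  [/\ dot3 (pnormal H1) (pnormal H2) = 0,
      dot3 (pnormal H1) (pnormal H3) = 0 &
      dot3 (pnormal H2) (pnormal H3) = 0].

Definition Gamma (R : realType) (M : R) (x : pt R) : Prop :=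
  exists t : R, M <= t /\ x = gamma t.

Definition at_most (R : realType) (k : nat) (A : pt R -> Prop) : Prop :=
  forall s : seq (pt R), uniq s -> (forall x, x \in s -> A x) -> (size s <= k)%N.

Definition good_M3 (R : realType) (M : R) : Prop :=
  forall H1 H2 H3 : plane R,
    is_plane H1 -> is_plane H2 -> is_plane H3 ->
    mutually_orthogonal H1 H2 H3 ->
    [\/ at_most 1 (fun x => Gamma M x /\ in_plane H1 x),
        at_most 1 (fun x => Gamma M x /\ in_plane H2 x) |
        at_most 1 (fun x => Gamma M x /\ in_plane H3 x)].

(* A plane with normal (n1, n2, n3) and offset c meets the moment curve at the
   roots of the cubic n3 t^3 + n2 t^2 + n1 t - c, which is a nonzero
   polynomial, so every plane meets Gamma in at most 3 points.  If a plane
   meets Gamma at three distinct parameters, Vieta's formulas give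
   (n1, n2, n3) = n3 (e2, -e1, 1) with e1, e2 the elementary symmetric
   functions of the roots and n3 <> 0.  For two such planes the roots are
   positive (as M3 > 0), so the inner product n3 m3 (e2 e2' + e1 e1' + 1) of
   their normals is nonzero: of two orthogonal planes, one meets Gamma in at
   most 2 points.  With the hypothesis on M3 this gives the bound 1 + 2 + 3. *)
From mathcomp Require Import all_boot all_order all_algebra.
From mathcomp Require Import reals boolp ring.
Set Implicit Arguments.
Unset Strict Implicit.
Unset Printing Implicit Defensive.
Import Order.TTheory GRing.Theory Num.Theory.
Local Open Scope ring_scope.

Lemma cubic_coefs_of_three_roots (R : idomainType) (a b c d t1 t2 t3 : R) :
  t1 != t2 -> t1 != t3 -> t2 != t3 ->
  a * t1 + b * t1 ^+ 2 + c * t1 ^+ 3 = d ->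
  a * t2 + b * t2 ^+ 2 + c * t2 ^+ 3 = d ->
  a * t3 + b * t3 ^+ 2 + c * t3 ^+ 3 = d ->
  b = - (c * (t1 + t2 + t3)) /\ a = c * (t1 * t2 + t1 * t3 + t2 * t3).
Proof.
move=> n12 n13 n23 e1 e2 e3.
pose f x := a * x + b * x ^+ 2 + c * x ^+ 3.
pose g x y := a + b * (x + y) + c * (x ^+ 2 + x * y + y ^+ 2).
have slope u v : u != v -> f u = f v -> g u v = 0.
  rewrite -subr_eq0 => nuv euv; apply: (mulfI nuv); rewrite mulr0.
  have -> : (u - v) * g u v = f u - f v by rewrite /f /g; ring.
  by rewrite euv subrr.
have s12 : g t1 t2 = 0 by apply: slope; rewrite // /f e1 e2.
have s13 : g t1 t3 = 0 by apply: slope; rewrite // /f e1 e3.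
have eb : b = - (c * (t1 + t2 + t3)).
  apply/eqP; rewrite -addr_eq0; apply/eqP; rewrite -subr_eq0 in n23.
  apply: (mulfI n23); rewrite mulr0.
  have -> : (t2 - t3) * (b + c * (t1 + t2 + t3)) = g t1 t2 - g t1 t3.
    by rewrite /g; ring.
  by rewrite s12 s13 subrr.
split=> //.
have -> : a = g t1 t2 - b * (t1 + t2) - c * (t1 ^+ 2 + t1 * t2 + t2 ^+ 2).
  by rewrite /g; ring.
by rewrite s12 eb; ring.
Qed.

Section MomentCurve.
Variable R : realType.

Lemma in_plane_gamma (n1 n2 n3 c t : R) :
  in_plane (Plane (n1, n2, n3) c) (gamma t) <->
  n1 * t + n2 * t ^+ 2 + n3 * t ^+ 3 = c.
Proof. by []. Qed.

Lemma at_mostW (k1 k2 : nat) (P Q : pt R -> Prop) :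
  (k1 <= k2)%N -> (forall x, Q x -> P x) -> at_most k1 P -> at_most k2 Q.
Proof. by move=> k12 QP hP s us sQ; apply: leq_trans k12; apply: hP => // x /sQ/QP. Qed.

Lemma at_mostU (k1 k2 : nat) (P Q : pt R -> Prop) :
  at_most k1 P -> at_most k2 Q -> at_most (k1 + k2) (fun x => P x \/ Q x).
Proof.
move=> hP hQ s us sPQ; rewrite -(count_predC (fun x => `[< P x >]) s) -!size_filter.
apply: leq_add; [apply: hP | apply: hQ]; rewrite ?filter_uniq // => x.
  by rewrite mem_filter => /andP[/asboolP].
by rewrite mem_filter => /andP[/asboolPn nPx /sPQ[]].
Qed.

(* A point of Gamma determines its parameter as its first coordinate. *)
Lemma at_most_Gamma (M : R) (P : pt R -> Prop) (k : nat) :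
  (forall ts : seq R, uniq ts -> (forall t, t \in ts -> M <= t /\ P (gamma t)) ->
     (size ts <= k)%N) ->
  at_most k (fun x => Gamma M x /\ P x).
Proof.
move=> hk s us sGP; have gammaK x : x \in s -> gamma x.1.1 = x.
  by move=> /sGP[[t [_ ->]] _].
rewrite -(size_map (fun x => x.1.1)); apply: hk.
  rewrite map_inj_in_uniq // => x y xs ys exy.
  by rewrite -(gammaK x xs) -(gammaK y ys) exy.
by move=> _ /mapP[x xs ->]; have [[t [Mt ->]] Px] := sGP x xs.
Qed.

Definition plane_poly (H : plane R) : {poly R} :=
  Poly [:: - poffset H; (pnormal H).1.1; (pnormal H).1.2; (pnormal H).2].

Lemma root_plane_poly (H : plane R) (t : R) :
  in_plane H (gamma t) <-> root (plane_poly H) t.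
Proof.
case: H => [[[n1 n2] n3] c]; rewrite in_plane_gamma /root /plane_poly horner_Poly /=.
have -> : (((0 * t + n3) * t + n2) * t + n1) * t + - c =
  n1 * t + n2 * t ^+ 2 + n3 * t ^+ 3 - c by ring.
by rewrite subr_eq0; split=> [->|/eqP].
Qed.

Lemma plane_poly_neq0 (H : plane R) : is_plane H -> plane_poly H != 0.
Proof.
case: H => [[[n1 n2] n3] c] pH; apply/eqP => p0; apply: pH.
have := congr1 (fun p : {poly R} => (p`_1, p`_2, p`_3)) p0.
by rewrite /= !coef_Poly !coef0.
Qed.

Lemma plane_Gamma_at_most3 (M : R) (H : plane R) :
  is_plane H -> at_most 3 (fun x => Gamma M x /\ in_plane H x).
Proof.
move=> pH; apply: at_most_Gamma => ts uts hts.
rewrite -ltnS (leq_trans (max_poly_roots (plane_poly_neq0 pH) _ uts)) ?size_Poly //.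
by apply/allP => t /hts[_ /root_plane_poly].
Qed.

Definition scale3 (a : R) (v : pt R) : pt R := (a * v.1.1, a * v.1.2, a * v.2).

Definition moment_normal (t1 t2 t3 : R) : pt R :=
  (t1 * t2 + t1 * t3 + t2 * t3, - (t1 + t2 + t3), 1).

Lemma dot3_scale3 (a b : R) (u v : pt R) :
  dot3 (scale3 a u) (scale3 b v) = a * b * dot3 u v.
Proof. by rewrite /dot3 /=; ring. Qed.

Lemma dot3_moment_normal_gt0 (t1 t2 t3 u1 u2 u3 : R) :
  0 < t1 -> 0 < t2 -> 0 < t3 -> 0 < u1 -> 0 < u2 -> 0 < u3 ->
  0 < dot3 (moment_normal t1 t2 t3) (moment_normal u1 u2 u3).
Proof.
move=> *; rewrite /dot3 /= mulNr mulrN opprK mulr1.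
by rewrite !(addr_gt0, mulr_gt0).
Qed.

Lemma normal_through_gamma3 (H : plane R) (t1 t2 t3 : R) :
  t1 != t2 -> t1 != t3 -> t2 != t3 ->
  in_plane H (gamma t1) -> in_plane H (gamma t2) -> in_plane H (gamma t3) ->
  pnormal H = scale3 (pnormal H).2 (moment_normal t1 t2 t3).
Proof.
case: H => [[[n1 n2] n3] c]; rewrite !in_plane_gamma /= => n12 n13 n23 e1 e2 e3.
have [-> ->] := cubic_coefs_of_three_roots n12 n13 n23 e1 e2 e3.
by rewrite /scale3 /= mulr1 mulrN.
Qed.

Lemma plane_through_Gamma3 (M : R) (H : plane R) (ts : seq R) :
  is_plane H -> uniq ts -> (2 < size ts)%N ->
  (forall t, t \in ts -> M <= t /\ in_plane H (gamma t)) ->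
  exists c t1 t2 t3, [/\ c != 0, M <= t1, M <= t2, M <= t3 &
    pnormal H = scale3 c (moment_normal t1 t2 t3)].
Proof.
case: ts => [|t1 [|t2 [|t3 ts]]] // pH; rewrite /= !inE !negb_or.
move=> /and3P[/and3P[n12 n13 _] /andP[n23 _] _] _ hts.
have [M1 on1] := hts t1 (mem_head _ _).
have [M2 on2] : M <= t2 /\ in_plane H (gamma t2) by apply: hts; rewrite !inE eqxx orbT.
have [M3 on3] : M <= t3 /\ in_plane H (gamma t3) by apply: hts; rewrite !inE eqxx !orbT.
have eH := normal_through_gamma3 n12 n13 n23 on1 on2 on3.
exists (pnormal H).2, t1, t2, t3; split=> //.
by apply/eqP => c0; apply: pH; rewrite eH c0 /scale3 !mul0r.
Qed.

Lemma orthogonal_planes_Gamma_at_most2 (M : R) (H K : plane R) :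
  0 < M -> is_plane H -> is_plane K -> dot3 (pnormal H) (pnormal K) = 0 ->
  at_most 2 (fun x => Gamma M x /\ in_plane H x) \/
  at_most 2 (fun x => Gamma M x /\ in_plane K x).
Proof.
move=> M0 pH pK HK.
have [|nH] := pselect (at_most 2 (fun x => Gamma M x /\ in_plane H x)); [by left | right].
apply: at_most_Gamma => us uus hus; rewrite leqNgt; apply/negP => bigu.
apply: nH; apply: at_most_Gamma => ts uts hts; rewrite leqNgt; apply/negP => bigt.
have [c [t1 [t2 [t3 [c0 M1 M2 M3 eH]]]]] := plane_through_Gamma3 pH uts bigt hts.
have [d [u1 [u2 [u3 [d0 N1 N2 N3 eK]]]]] := plane_through_Gamma3 pK uus bigu hus.
move/eqP: HK; rewrite eH eK dot3_scale3 !mulf_eq0 (negbTE c0) (negbTE d0) /=.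
by rewrite gt_eqF // dot3_moment_normal_gt0 // (lt_le_trans M0).
Qed.

End MomentCurve.

Theorem mainTheorem5 (R : realType) (M3 : R) :
  good_M3 M3 -> 0 < M3 ->
  forall H1 H2 H3 : plane R,
    is_plane H1 -> is_plane H2 -> is_plane H3 ->
    mutually_orthogonal H1 H2 H3 ->
    at_most 6 (fun x => Gamma M3 x /\ (in_plane H1 x \/ in_plane H2 x \/ in_plane H3 x)).
Proof.
move=> good M0 H1 H2 H3 p1 p2 p3 orth; have [o12 o13 o23] := orth.
pose A H x := Gamma M3 x /\ in_plane H x.
have le3 H : is_plane H -> at_most 3 (A H) := @plane_Gamma_at_most3 _ M3 H.
suff bound (k1 k2 k3 : nat) : (k1 + k2 + k3 = 6)%N ->
    at_most k1 (A H1) -> at_most k2 (A H2) -> at_most k3 (A H3) ->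
    at_most 6 (fun x => Gamma M3 x /\ (in_plane H1 x \/ in_plane H2 x \/ in_plane H3 x)).
  case: (good _ _ _ p1 p2 p3 orth) => one.
  - have [two|two] := orthogonal_planes_Gamma_at_most2 M0 p2 p3 o23.
      exact: (bound 1 2 3)%N one two (le3 _ p3).
    exact: (bound 1 3 2)%N one (le3 _ p2) two.
  - have [two|two] := orthogonal_planes_Gamma_at_most2 M0 p1 p3 o13.
      exact: (bound 2 1 3)%N two one (le3 _ p3).
    exact: (bound 3 1 2)%N (le3 _ p1) one two.
  - have [two|two] := orthogonal_planes_Gamma_at_most2 M0 p1 p2 o12.
      exact: (bound 2 3 1)%N two (le3 _ p2) one.
    exact: (bound 3 2 1)%N (le3 _ p1) two one.
move=> <- b1 b2 b3; rewrite -addnA.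
apply: at_mostW (at_mostU b1 (at_mostU b2 b3)) => // x [Gx [on1|[on2|on3]]].
- by left.
- by right; left.
- by right; right.
Qed.
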